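(* Fix $\beta>0$ and an MDP with a sink state as in the context. For each $t\in\mathbb N$, each stationary policy $\pi=(\bm d)_\infty\in\Pi_{\mathrm{SR}}$ and each probability vector $\bm\eta\in\Delta^S$: \[ \bm\eta^\top(\bm B^{\bm d})^t\bm b^{\bm d}=0\quad\Longleftrightarrow\quad\bm\eta^\top(\bm P^{\bm d})^t\bm p^{\bm d}=0. \]
   Context: MDP: states $\mathcal S=\{1,\dots,S\}$ plus sink state $e$; finite actions; transitions $p(s,a,s')$, real rewards $r(s,a,s')$. $\Pi_{\mathrm{SR}}$: stationary randomized policies $(\bm d)_\infty$, $d_a(s)$ the probability of action $a$ in $s$. $B^{\bm d}_{s,s'}=\sum_a p(s,a,s')d_a(s)e^{-\beta r(s,a,s')}$, $b^{\bm d}_s=\sum_a p(s,a,e)d_a(s)e^{-\beta r(s,a,e)}$, $P^{\bm d}_{s,s'}=\sum_a d_a(s)p(s,a,s')$, $p^{\bm d}_s=\sum_a d_a(s)p(s,a,e)$ for $s,s'\in\mathcal S$. $\Delta^S$ is the probability simplex in $\mathbb R^S$. *)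

From mathcomp Require Import all_boot all_order all_algebra.
From mathcomp Require Import reals.
From mathcomp.analysis Require Import sequences exp.
Set Implicit Arguments. Unset Strict Implicit. Unset Printing Implicit Defensive.
Import Order.TTheory GRing.Theory Num.Theory.
Local Open Scope ring_scope.

(* States 1..S are 'I_S; the full state space including the sink e is
   option 'I_S, with None = e.  Actions range over a finite type A. *)

Definition is_transition (R : realType) (S : nat) (A : finType)
  (p : 'I_S -> A -> option 'I_S -> R) : Prop :=
  (forall s a s', 0 <= p s a s') /\ (forall s a, \sum_(s' : option 'I_S) p s a s' = 1).

Definition is_decision_rule (R : realType) (S : nat) (A : finType)
  (d : 'I_S -> A -> R) : Prop :=
  (forall s a, 0 <= d s a) /\ (forall s, \sum_(a : A) d s a = 1).

Definition in_simplex (R : realType) (S : nat) (eta : 'rV[R]_S) : Prop :=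
  (forall i, 0 <= eta 0 i) /\ \sum_(i < S) eta 0 i = 1.

Section MDPmats.
Variables (R : realType) (S : nat) (A : finType).
Variables (p : 'I_S -> A -> option 'I_S -> R) (r : 'I_S -> A -> option 'I_S -> R).
Variables (beta : R) (d : 'I_S -> A -> R).

Definition Bmx : 'M[R]_S :=
  \matrix_(s, s') \sum_(a : A) p s a (Some s') * d s a * expR (- beta * r s a (Some s')).
Definition bvec : 'cV[R]_S :=
  \col_s \sum_(a : A) p s a None * d s a * expR (- beta * r s a None).
Definition Pmx : 'M[R]_S := \matrix_(s, s') \sum_(a : A) d s a * p s a (Some s').
Definition pvec : 'cV[R]_S := \col_s \sum_(a : A) d s a * p s a None.
End MDPmats.

(* matrix power M^t (valid for any size S, including 0) *)
Definition mxpow (R : ringType) (S : nat) (M : 'M[R]_S) (t : nat) : 'M[R]_S :=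
  iter t (mulmx M) 1%:M.

From mathcomp Require Import all_boot all_order all_algebra.
From mathcomp Require Import reals.
From mathcomp.analysis Require Import sequences exp.
Import Order.TTheory GRing.Theory Num.Theory.
Set Implicit Arguments.
Unset Strict Implicit.

Local Open Scope ring_scope.

(* Each entry of B^d (resp. b^d) is the corresponding entry of P^d (resp. p^d)
   with every summand scaled by a positive factor e^{-beta r}.  Among
   nonnegative numbers, vanishing together is preserved by sums and products
   (no cancellation can occur), hence by matrix products and powers, so the two
   scalars vanish together. *)

Section SameSupport.
Variable R : numDomainType.

Definition same_support (x y : R) : bool :=
  [&& 0 <= x, 0 <= y & (x == 0) == (y == 0)].

Definition mx_same_support m n (X Y : 'M[R]_(m, n)) : Prop :=
  forall i j, same_support (X i j) (Y i j).

Lemma same_support_refl (x : R) : 0 <= x -> same_support x x.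
Proof. by move=> x0; rewrite /same_support x0 eqxx. Qed.

Lemma same_support_mulr_gt0 (x c : R) :
  0 <= x -> 0 < c -> same_support (x * c) x.
Proof.
move=> x0 c0; rewrite /same_support (mulr_ge0 x0 (ltW c0)) x0.
by rewrite mulf_eq0 (gt_eqF c0) orbF eqxx.
Qed.

Lemma same_support_add (x y x' y' : R) :
  same_support x y -> same_support x' y' -> same_support (x + x') (y + y').
Proof.
case/and3P=> x0 y0 /eqP exy; case/and3P=> x'0 y'0 /eqP exy'.
by rewrite /same_support !addr_ge0 // !paddr_eq0 // exy exy' eqxx.
Qed.

Lemma same_support_mul (x y x' y' : R) :
  same_support x y -> same_support x' y' -> same_support (x * x') (y * y').
Proof.
case/and3P=> x0 y0 /eqP exy; case/and3P=> x'0 y'0 /eqP exy'.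
by rewrite /same_support !mulr_ge0 // !mulf_eq0 exy exy' eqxx.
Qed.

Lemma same_support_sum (I : Type) (r : seq I) (P : pred I) (F G : I -> R) :
  (forall i, P i -> same_support (F i) (G i)) ->
  same_support (\sum_(i <- r | P i) F i) (\sum_(i <- r | P i) G i).
Proof.
apply: (big_ind2 (fun x y => same_support x y)) => //.
- exact: same_support_refl.
- exact: same_support_add.
Qed.

Lemma mx_same_support_mul m n k (X Y : 'M[R]_(m, n)) (M N : 'M[R]_(n, k)) :
  mx_same_support X Y -> mx_same_support M N ->
  mx_same_support (X *m M) (Y *m N).
Proof.
move=> XY MN i j; rewrite !mxE.
by apply: same_support_sum => l _; apply: same_support_mul.
Qed.

Lemma mx_same_support_mxpow m n (B P : 'M[R]_n) (U V : 'M[R]_(m, n)) t :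
  mx_same_support B P -> mx_same_support U V ->
  mx_same_support (U *m mxpow B t) (V *m mxpow P t).
Proof.
move=> BP; elim: t U V => [|t IHt] U V UV; first by rewrite !mulmx1.
by rewrite /mxpow /= !mulmxA; apply: IHt; apply: mx_same_support_mul.
Qed.

Lemma mx11_same_support_eq0 (X Y : 'M[R]_1) :
  mx_same_support X Y -> (X = 0 <-> Y = 0).
Proof.
have mx11_eq0 (Z : 'M[R]_1) : (Z == 0) = (Z 0 0 == 0).
  apply/eqP/eqP => [->|Z00]; first by rewrite mxE.
  by apply/rowP => i; rewrite ord1 Z00 mxE.
move=> /(_ 0 0)/and3P[_ _ /eqP XY].
have XY0 : (X == 0) = (Y == 0) by rewrite !mx11_eq0.
by split=> /eqP E; apply/eqP; [rewrite -XY0 | rewrite XY0].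
Qed.

End SameSupport.

Section DiscountedKernel.
Variables (R : realType) (S : nat) (A : finType).
Variables (p r : 'I_S -> A -> option 'I_S -> R) (beta : R) (d : 'I_S -> A -> R).
Hypotheses (p_ge0 : forall s a s', 0 <= p s a s')
           (d_ge0 : forall s a, 0 <= d s a).

Lemma discounted_term_same_support s a s' :
  same_support (p s a s' * d s a * expR (- beta * r s a s')) (d s a * p s a s').
Proof.
rewrite (mulrC (d s a)).
by apply: same_support_mulr_gt0; rewrite ?mulr_ge0 ?expR_gt0.
Qed.

Lemma Bmx_Pmx_same_support : mx_same_support (Bmx p r beta d) (Pmx p d).
Proof.
by move=> s s'; rewrite !mxE; apply: same_support_sum => a _;
  apply: discounted_term_same_support.
Qed.

Lemma bvec_pvec_same_support : mx_same_support (bvec p r beta d) (pvec p d).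
Proof.
by move=> s j; rewrite !mxE; apply: same_support_sum => a _;
  apply: discounted_term_same_support.
Qed.

End DiscountedKernel.

Theorem lemma8 (R : realType) (S : nat) (A : finType)
  (p : 'I_S -> A -> option 'I_S -> R) (r : 'I_S -> A -> option 'I_S -> R)
  (beta : R) (hbeta : 0 < beta) (hp : is_transition p)
  (t : nat) (d : 'I_S -> A -> R) (hd : is_decision_rule d)
  (eta : 'rV[R]_S) (heta : in_simplex eta) :
  (eta *m mxpow (Bmx p r beta d) t *m bvec p r beta d = 0)
  <-> (eta *m mxpow (Pmx p d) t *m pvec p d = 0).
Proof.
case: hp => p_ge0 _; case: hd => d_ge0 _; case: heta => eta_ge0 _.
have eta_eta : mx_same_support eta eta.
  by move=> i j; rewrite (ord1 i); apply: same_support_refl.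
apply: mx11_same_support_eq0; apply: mx_same_support_mul.
- apply: mx_same_support_mxpow eta_eta.
  exact: Bmx_Pmx_same_support.
- exact: bvec_pvec_same_support.
Qed.
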